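(* The Eulerian polynomials $A_n(q)=\sum_{k=0}^nA(n,k)q^k$, $n\ge 0$, form a $q$-log-convex sequence.
   Context: The Eulerian numbers $A(n,k)$ are given by $A(0,0)=1$, $A(n,k)=0$ unless $0\le k\le n$, and $A(n,k)=kA(n-1,k)+(n-k+1)A(n-1,k-1)$ for $n\ge 1$; for $n\ge1$, $A(n,k)$ is the number of permutations of $\{1,\dots,n\}$ with exactly $k-1$ descents. For real polynomials $f,g$ write $f\le_q g$ if $g-f$ has nonnegative coefficients; a sequence $\{P_n(q)\}_{n\ge0}$ is $q$-log-convex if $P_n(q)^2\le_q P_{n-1}(q)P_{n+1}(q)$ for all $n\ge 1$. *)

From HB Require Import structures.
From mathcomp Require Import all_boot all_order all_algebra.
Set Implicit Arguments. Unset Strict Implicit. Unset Printing Implicit Defensive.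
Import Order.TTheory GRing.Theory Num.Theory.

(* Eulerian numbers A(n,k): A(0,0)=1, A(0,k)=0 for k>0,
   A(n,0)=0 for n>=1 (since A(n-1,-1)=0 and k=0),
   A(n,k) = k*A(n-1,k) + (n-k+1)*A(n-1,k-1) for n>=1, k>=1.
   For k > n this yields 0 automatically (coefficient (n-k+1) is truncated, but
   then A(n-1,k-1)=0 and A(n-1,k)=0 anyway). *)
Fixpoint eulerian (n k : nat) {struct n} : nat :=
  match n with
  | 0 => if k == 0 then 1 else 0
  | n'.+1 =>
      match k with
      | 0 => 0
      | k'.+1 => k * eulerian n' k + (n - k + 1) * eulerian n' k'
      end
  end.

Definition eulerian_poly (n : nat) : {poly int} :=
  \sum_(0 <= k < n.+1) (eulerian n k)%:R *: 'X^k.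

Local Open Scope ring_scope.

Definition qle (f g : {poly int}) : Prop := forall i : nat, 0 <= (g - f)`_i.

Definition q_log_convex (P : nat -> {poly int}) : Prop :=
  forall n : nat, (1 <= n)%N -> qle (P n ^+ 2) (P n.-1 * P n.+1).

From mathcomp Require Import all_boot all_order all_algebra.
From mathcomp Require Import ring zify.
Set Implicit Arguments. Unset Strict Implicit. Unset Printing Implicit Defensive.
Import Order.TTheory GRing.Theory Num.Theory.
Local Open Scope ring_scope.

(* The Eulerian polynomials have the Jacobi continued fraction with
   coefficients b_k = k + (k+1) q and lambda_k = k^2 q, i.e. A_n(q) is the
   weighted count of Motzkin paths of length n from height 0 back to 0.
   Collecting the paths by their final height k gives a triangle E(n,k) whose
   rows satisfy E_(n+1) = E_n J for the tridiagonal matrix J of the weights.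
   Coefficientwise, J has nonnegative 2x2 minors (b_k b_(k+1) - lambda_(k+1)
   has nonnegative coefficients), so by Cauchy-Binet so does any pair of
   consecutive rows of E; and
   A_n A_(n+2) - A_(n+1)^2 = lambda_1 (E(n,0) E(n+1,1) - E(n,1) E(n+1,0)).
   The identification with A_n goes through the recurrence
   A_(n+1) = (n+1) q A_n + q (1 - q) A_n'. *)

Lemma sum_nat_mulrn_eq (V : nmodType) (F : nat -> V) c N :
  \sum_(0 <= a < N) F a *+ (a == c) = F c *+ (c < N)%N.
Proof.
under eq_bigr do rewrite mulrb.
by rewrite -big_mkcond big_nat1_eq mulrb.
Qed.

Lemma binet_cauchy2 (R : comPzRingType) (x u y v : nat -> R) N :
  (\sum_(0 <= a < N) x a * y a) * (\sum_(0 <= a < N) u a * v a)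
  - (\sum_(0 <= a < N) x a * v a) * (\sum_(0 <= a < N) u a * y a)
  = \sum_(0 <= a < N) \sum_(0 <= b < a)
       (x b * u a - x a * u b) * (y b * v a - y a * v b).
Proof.
elim: N => [|N IH]; first by rewrite !big_geq // mulr0 subrr.
rewrite !big_nat_recr //= -IH.
have -> : \sum_(0 <= b < N) (x b * u N - x N * u b) * (y b * v N - y N * v b)
  = \sum_(0 <= b < N) ((x b * y b) * (u N * v N) - (x b * v b) * (u N * y N)
       - (u b * y b) * (x N * v N) + (u b * v b) * (x N * y N)).
  by apply: eq_bigr => b _; ring.
rewrite big_split /= !sumrB -!mulr_suml.
ring.
Qed.

Section MotzkinTriangle.

Variable R : comPzRingType.
Variables b lam : nat -> R.

(* Weighted Motzkin paths of length n from height 0 to height k: up steps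
   weigh 1, level steps at height k weigh b k, down steps from height k weigh
   lam k. *)
Fixpoint motzkin (n k : nat) : R :=
  if n is n'.+1 then
    (if k is k'.+1 then motzkin n' k' else 0)
    + b k * motzkin n' k + lam k.+1 * motzkin n' k.+1
  else (k == 0)%:R.

Lemma motzkinS n k : motzkin n.+1 k =
  (if k is k'.+1 then motzkin n k' else 0)
  + b k * motzkin n k + lam k.+1 * motzkin n k.+1.
Proof. by []. Qed.

Definition jacobi (a k : nat) : R :=
  1 *+ (a.+1 == k) + b k *+ (a == k) + lam a *+ (a == k.+1).

Lemma motzkin_sumE n k N : (k.+1 < N)%N ->
  motzkin n.+1 k = \sum_(0 <= a < N) motzkin n a * jacobi a k.
Proof.
move=> lt_k1N; have lt_kN := ltnW lt_k1N.
under eq_bigr do rewrite /jacobi !mulrDr !mulrnAr.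
rewrite !big_split /= !sum_nat_mulrn_eq lt_kN lt_k1N !mulr1n [b k * _]mulrC.
rewrite [lam _ * _]mulrC; congr (_ + _ + _).
case: k {lt_k1N} lt_kN => [|k] lt_kN /=; first by rewrite big1.
by under eq_bigr do rewrite eqSS; rewrite sum_nat_mulrn_eq mulr1 ltnW.
Qed.

Variable S : semiringClosed R.
Hypothesis b_in : forall k, b k \in S.
Hypothesis lam_in : forall k, lam k \in S.
Hypothesis jacobi_minor_in : forall k, b k * b k.+1 - lam k.+1 \in S.

Lemma motzkin_in n k : motzkin n k \in S.
Proof.
elim: n k => [|n IH] k /=; first exact: rpred_nat.
by rewrite !rpredD ?rpredM //; case: k => [|k]; rewrite ?rpred0.
Qed.

Lemma jacobi_in a k : jacobi a k \in S.
Proof. by rewrite !rpredD ?rpredMn ?rpred1. Qed.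

Lemma jacobi_eq0 a k : (k.+1 < a)%N || (a.+1 < k)%N -> jacobi a k = 0.
Proof.
move=> far; rewrite /jacobi.
have [-> -> ->] : [/\ a.+1 == k = false, a == k = false & a == k.+1 = false].
  by split; lia.
by rewrite !mulr0n !addr0.
Qed.

Lemma jacobi_minor2_in a a' k l : (a < a')%N -> (k < l)%N ->
  jacobi a k * jacobi a' l - jacobi a' k * jacobi a l \in S.
Proof.
move=> lt_aa' lt_kl.
have [corner | far] := boolP ((l <= a.+1)%N && (a' <= k.+1)%N).
  have [-> -> ->] : [/\ a' = a.+1, k = a & l = a.+1] by split; lia.
  have aS := ltnSn a; have aSS := leqnSn a.+1.
  rewrite /jacobi !eqxx !eqSS (ltn_eqF aS) (gtn_eqF aS) (ltn_eqF aSS) (gtn_eqF aSS).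
  by rewrite !mulr0n !mulr1n !(add0r, addr0) mulr1.
rewrite [jacobi a' k * _](_ : _ = 0) ?subr0 ?rpredM ?jacobi_in //.
move: far; rewrite negb_and -!ltnNge => /orP[far | far].
  by rewrite (jacobi_eq0 (a := a) (k := l)) ?mulr0 // far orbT.
by rewrite jacobi_eq0 ?mul0r // far.
Qed.

Lemma motzkin_minor2_in n k l : (k < l)%N ->
  motzkin n k * motzkin n.+1 l - motzkin n l * motzkin n.+1 k \in S.
Proof.
elim: n k l => [|n IH] k l lt_kl.
  have l_neq0 : (l == 0) = false by lia.
  by rewrite [motzkin 0 l]/= l_neq0 mul0r subr0 rpredM ?motzkin_in.
have lt_kN : (k.+1 < l.+2)%N by lia.
have lt_lN : (l.+1 < l.+2)%N by [].
rewrite !(motzkin_sumE _ lt_kN) !(motzkin_sumE _ lt_lN) binet_cauchy2.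
rewrite rpred_sum // => a _; rewrite big_nat rpred_sum // => a' /andP[_ lt_a'a].
by rewrite rpredM ?IH ?jacobi_minor2_in.
Qed.

Lemma motzkin_log_convex n :
  motzkin n 0 * motzkin n.+2 0 - motzkin n.+1 0 ^+ 2 \in S.
Proof.
have -> : motzkin n 0 * motzkin n.+2 0 - motzkin n.+1 0 ^+ 2
    = lam 1 * (motzkin n 0 * motzkin n.+1 1 - motzkin n 1 * motzkin n.+1 0).
  by rewrite /=; ring.
by rewrite rpredM ?motzkin_minor2_in.
Qed.

End MotzkinTriangle.

Lemma eulerian_eq0 n k : (n < k)%N -> eulerian n k = 0%N.
Proof. by elim: n k => [|n IH] [|k] //= lt_nk; rewrite !IH //; lia. Qed.

Lemma coef_eulerian_poly n i : (eulerian_poly n)`_i = (eulerian n i)%:R.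
Proof.
rewrite /eulerian_poly coef_sum.
under eq_bigr do rewrite coefZ coefXn mulr_natr eq_sym.
rewrite sum_nat_mulrn_eq; case: ltnP => // lt_ni.
by rewrite eulerian_eq0.
Qed.

Lemma eulerian_poly_rec n : eulerian_poly n.+1 =
  n.+1%:R * 'X * eulerian_poly n + 'X * (1 - 'X) * (eulerian_poly n)^`().
Proof.
apply/polyP => i.
rewrite coefD -!mulrA mulr_natl coefMn !coefXM coef_eulerian_poly.
case: i => [|j] /=; first by rewrite mul0rn addr0.
rewrite mulrBl mul1r coefB coefXM coef_deriv !coef_eulerian_poly.
have -> : (if j == 0%N then 0 else (eulerian_poly n)^`()`_j.-1)
    = (eulerian n j)%:R *+ j.
  by case: j => [|k] /=; rewrite ?mulr0n // coef_deriv coef_eulerian_poly.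
have [le_jn | lt_nj] := leqP j n.
  have -> : (n.+1 - j.+1 + 1 = (n - j) + 1)%N by lia.
  by rewrite natrD !natrM natrD natrB //; ring.
by rewrite !eulerian_eq0 ?muln0 /= ?mul0rn; [ring | lia | lia].
Qed.

Definition eulerian_jacobi_b (k : nat) : {poly int} := k%:R + k.+1%:R * 'X.
Definition eulerian_jacobi_lambda (k : nat) : {poly int} := k%:R ^+ 2 * 'X.

Local Notation euler_motzkin := (motzkin eulerian_jacobi_b eulerian_jacobi_lambda).

Lemma deriv_nat (R : nzRingType) n : (n%:R : {poly R})^`() = 0.
Proof. by rewrite -polyC_natr derivC. Qed.

Lemma eq_lincomb3 (R : pzRingType) (x x' y y' z z' l r cx cy cz : R) :
  x = x' -> y = y' -> z = z' ->
  l - r = cx * (x - x') + cy * (y - y') + cz * (z - z') -> l = r.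
Proof. by move=> -> -> -> /eqP; rewrite !subrr !mulr0 !addr0 subr_eq0 => /eqP. Qed.

Lemma euler_motzkin_deriv n k :
  (n%:R - k%:R) * euler_motzkin n k + (1 - 'X) * (euler_motzkin n k)^`()
  = k.+1%:R ^+ 2 * euler_motzkin n k.+1.
Proof.
elim: n k => [|n IH] k.
  by case: k => [|k] /=; rewrite ?deriv_nat; ring.
(* The identity at (n+1, k) is the combination of those at (n, k-1), (n, k)
   and (n, k+1) with the weights of the Motzkin recurrence. *)
have derivE := (deriv_nat, derivD, derivB, derivM, derivX).
case: k => [|k].
  apply: (eq_lincomb3 (cx := eulerian_jacobi_b 0) (cy := eulerian_jacobi_lambda 1)
            (cz := 0) (IH 0) (IH 1) (erefl 0)).
  rewrite !motzkinS /eulerian_jacobi_b /eulerian_jacobi_lambda !expr2 !derivE.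
  ring.
apply: (eq_lincomb3 (cx := 1) (cy := eulerian_jacobi_b k.+1)
          (cz := eulerian_jacobi_lambda k.+2) (IH k) (IH k.+1) (IH k.+2)).
rewrite !motzkinS /eulerian_jacobi_b /eulerian_jacobi_lambda !expr2 !derivE.
ring.
Qed.

Lemma eulerian_poly_motzkin n : eulerian_poly n = euler_motzkin n 0.
Proof.
elim: n => [|n IH].
  by apply/polyP => i; rewrite coef_eulerian_poly coef1; case: i.
apply: (eq_lincomb3 (cx := 'X) (cy := 0) (cz := 0)
          (euler_motzkin_deriv n 0) (erefl 0) (erefl 0)).
by rewrite eulerian_poly_rec IH /= /eulerian_jacobi_b /eulerian_jacobi_lambda; ring.
Qed.

Local Notation nonneg_poly := (polyOver (@Num.Def.nneg_num_pred int)).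

Lemma eulerian_jacobi_b_nonneg k : eulerian_jacobi_b k \is a nonneg_poly.
Proof. by rewrite rpredD ?rpredM ?rpred_nat ?polyOverX. Qed.

Lemma eulerian_jacobi_lambda_nonneg k : eulerian_jacobi_lambda k \is a nonneg_poly.
Proof. by rewrite rpredM ?rpredX ?rpred_nat ?polyOverX. Qed.

Lemma eulerian_jacobi_minor_nonneg k :
  eulerian_jacobi_b k * eulerian_jacobi_b k.+1 - eulerian_jacobi_lambda k.+1
  \is a nonneg_poly.
Proof.
have -> : eulerian_jacobi_b k * eulerian_jacobi_b k.+1 - eulerian_jacobi_lambda k.+1
    = (k * k.+1)%:R + (k * k.+2)%:R * 'X + (k.+1 * k.+2)%:R * 'X ^+ 2.
  by rewrite /eulerian_jacobi_b /eulerian_jacobi_lambda; ring.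
by rewrite !rpredD ?rpredM ?rpredX ?rpred_nat ?polyOverX.
Qed.

Theorem proposition4p6 : q_log_convex eulerian_poly.
Proof.
move=> [|n] // _; rewrite /qle /= !eulerian_poly_motzkin.
suff /polyOverP : euler_motzkin n 0 * euler_motzkin n.+2 0
    - euler_motzkin n.+1 0 ^+ 2 \is a nonneg_poly by [].
apply: motzkin_log_convex.
- exact: eulerian_jacobi_b_nonneg.
- exact: eulerian_jacobi_lambda_nonneg.
- exact: eulerian_jacobi_minor_nonneg.
Qed.
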